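(* Let $d\ge 4$ be even, $n=\frac{d^2}{2}$, and consider the $[[d^2,2,d]]$ generalized bicycle code defined by $a(x)=1+x$, $b(x)=1+x^{d+1}$. If all syndrome extractions are performed using the RL pattern, the effective distance of the code is $d$.
   Context: $R_n=\mathbb{F}_2[x]/\langle x^n-1\rangle$, vectors of $\mathbb{F}_2^{2n}$ are pairs $(u,v)$ of elements of $R_n$ (left half, right half), weight = number of nonzero coefficients. Code spaces: $C_2=\{(c(1+x),c(1+x^{d+1}))\}$ (X-stabilizers), $C_1=\{(u,v):u(1+x^{d+1})+v(1+x)=0\}$, $C_2'=\{(c(1+x^{-(d+1)}),c(1+x^{-1}))\}$ (Z-stabilizers), $C_1'=\{(u,v):u(1+x^{-1})+v(1+x^{-(d+1)})=0\}$, $x^{-1}=x^{n-1}$; undetectable X- (resp. Z-) logical errors are elements of $C_1\setminus C_2$ (resp. $C_1'\setminus C_2'$). Each check $x^i(1+x,1+x^{d+1})$ and $x^i(1+x^{-(d+1)},1+x^{-1})$ is measured with one ancilla via four CNOTs. In the RL pattern the ancilla first interacts with the check's two right-half qubits and then with its two left-half qubits, so a single ancilla fault between the two halves propagates to errors of the check's type on its two left-half qubits, i.e. $(x^i(1+x),0)$ for X-checks and $(x^i(1+x^{-(d+1)}),0)$ for Z-checks; any other single ancilla fault is equivalent to at most one data-qubit error. The effective distance is the minimum of $\mathrm{wt}(j)+\mathrm{wt}(u)+\mathrm{wt}(v)$ over $j,u,v\in R_n$ with $(u+j(x)(1+x),v)\in C_1\setminus C_2$ or $(u+j(x)(1+x^{-(d+1)}),v)\in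 C_1'\setminus C_2'$. *)

(* R_n = F_2[x]/<x^n - 1> is represented by {poly 'F_2}
   taken modulo x^n - 1: elements are polynomials, equality in R_n is
   equality of remainders mod x^n - 1, and the weight of an element is the
   number of nonzero coefficients of its reduced representative. *)
From HB Require Import structures.
From mathcomp Require Import all_boot all_order all_algebra.
Set Implicit Arguments. Unset Strict Implicit. Unset Printing Implicit Defensive.
Import GRing.Theory.
Local Open Scope ring_scope.

Notation F2 := ('F_2 : fieldType).
Notation poly2 := {poly 'F_2}.

Definition modulus (n : nat) : poly2 := 'X^n - 1.

Definition eqR (n : nat) (p q : poly2) : Prop := p %% modulus n = q %% modulus n.

Definition wt (n : nat) (p : poly2) : nat :=
  count (fun c : 'F_2 => c != 0) (p %% modulus n).

(* x^{-k} in R_n, for 0 <= k <= n, is x^{n-k} *)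
Definition xinv (n k : nat) : poly2 := 'X^(n - k).

(* X-stabilizer space C_2 *)
Definition C2 (n d : nat) (u v : poly2) : Prop :=
  exists c : poly2, eqR n u (c * (1 + 'X)) /\ eqR n v (c * (1 + 'X^(d.+1))).
Definition C1 (n d : nat) (u v : poly2) : Prop :=
  eqR n (u * (1 + 'X^(d.+1)) + v * (1 + 'X)) 0.
(* Z-stabilizer space C_2' *)
Definition C2' (n d : nat) (u v : poly2) : Prop :=
  exists c : poly2, eqR n u (c * (1 + xinv n d.+1)) /\ eqR n v (c * (1 + xinv n 1)).
Definition C1' (n d : nat) (u v : poly2) : Prop :=
  eqR n (u * (1 + xinv n 1) + v * (1 + xinv n d.+1)) 0.

Definition X_logical (n d : nat) (u v : poly2) : Prop := C1 n d u v /\ ~ C2 n d u v.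
Definition Z_logical (n d : nat) (u v : poly2) : Prop := C1' n d u v /\ ~ C2' n d u v.

(* (j,u,v) is a fault configuration (j = hook/ancilla faults, u,v = data errors)
   producing an undetectable logical error under the RL pattern *)
Definition RL_bad (n d : nat) (j u v : poly2) : Prop :=
  X_logical n d (u + j * (1 + 'X)) v \/ Z_logical n d (u + j * (1 + xinv n d.+1)) v.

Definition effective_distance_RL (n d D : nat) : Prop :=
  (exists j u v, RL_bad n d j u v /\ (wt n j + wt n u + wt n v)%N = D) /\
  (forall j u v, RL_bad n d j u v -> (D <= wt n j + wt n u + wt n v)%N).

(* Work in Q = F_2[x]/(x^n - 1) with n = 2h^2, d = 2h, D = d + 1.  An undetectable
   error is a cycle (P, V), i.e. P (1 + z^D) + V (1 + z) = 0, that is not a boundary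
   c (1 + z, 1 + z^D); here z = x for X errors and z = x^-1 for Z errors (with the two
   halves swapped), and a hook fault j adds j (1 + z) to P, resp. j (1 + z^D) to V.
   The kernel of multiplication by 1 + x is {0, N}, N the all-ones word, so the
   pairing P g + V t of (P, V) with any other cycle (t, g) is 0 or N.  Three explicit
   cycles, of weights (h, h), (h - 1, h + 1) and (2h - 1, 1), do the work: if the
   pairings with the first two vanish then (P, V) is a boundary; otherwise the
   pairing with the first, or with both the second and the third, equals N, and as
   the weight is subadditive and submultiplicative, n = wt N is bounded by a weighted
   sum of the weights of the faults, which forces at least 2h faults.  The third
   cycle is itself a logical operator of weight 2h, so the bound is attained. *)

From HB Require Import structures.
From mathcomp Require Import all_boot all_order all_algebra.
From mathcomp Require Import ring zify.
Set Implicit Arguments. Unset Strict Implicit. Unset Printing Implicit Defensive.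
Import GRing.Theory.
Local Open Scope ring_scope.

Section HammingWeight.
Variable F : fieldType.
Implicit Types p q : {poly F}.

Definition hweight p : nat := count (fun c : F => c != 0) p.

Lemma hweight_coefE N p : (size p <= N)%N -> hweight p = (\sum_(i < N) (p`_i != 0)%R)%N.
Proof.
move=> le_pN; rewrite /hweight -sum1_count (big_nth 0) big_mkord big_mkcond /=.
rewrite (big_ord_widen N (fun i => if p`_i != 0 then 1%N else 0%N) le_pN) big_mkcond /=.
apply: eq_bigr => i _.
case: ltnP => [_|le_p_i]; first by case: (_ != 0).
by rewrite nth_default ?eqxx.
Qed.

Lemma hweight0 : hweight 0 = 0%N.
Proof. by rewrite /hweight polyseq0. Qed.

Lemma hweightD p q : (hweight (p + q) <= hweight p + hweight q)%N.
Proof.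
pose N := (size p + size q)%N.
have le_pN : (size p <= N)%N by rewrite leq_addr.
have le_qN : (size q <= N)%N by rewrite leq_addl.
have le_pqN : (size (p + q)%R <= N)%N.
  by rewrite (leq_trans (size_polyD _ _)) // geq_max le_pN.
rewrite !(hweight_coefE le_pN, hweight_coefE le_qN, hweight_coefE le_pqN) -big_split /=.
apply: leq_sum => i _; rewrite coefD.
have [->|_] := eqVneq p`_i 0; first by rewrite add0r.
by rewrite (leq_trans (leq_b1 _)) ?leq_addr.
Qed.

Lemma hweight_sum I (r : seq I) (P : pred I) (G : I -> {poly F}) :
  (hweight (\sum_(i <- r | P i) G i) <= \sum_(i <- r | P i) hweight (G i))%N.
Proof.
apply: (big_rec2 (fun a b => hweight a <= b)%N); first by rewrite hweight0.
by move=> i a b _ le_ab; apply: leq_trans (hweightD _ _) _; rewrite leq_add2l.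
Qed.

Lemma hweightZXn c k : hweight (c *: 'X^k) = (c != 0).
Proof.
have le_size : (size (c *: 'X^k)%R <= k.+1)%N.
  by rewrite (leq_trans (size_scale_leq _ _)) ?size_polyXn.
rewrite (hweight_coefE le_size) big_ord_recr /= coefZ coefXn eqxx mulr1 big1 // => i _.
by rewrite coefZ coefXn ltn_eqF ?mulr0 ?eqxx.
Qed.

Lemma hweightXn k : hweight 'X^k = 1%N.
Proof. by rewrite -['X^k]scale1r hweightZXn oner_neq0. Qed.

Lemma hweightM p q : (hweight (p * q) <= hweight p * hweight q)%N.
Proof.
have -> : p * q = \sum_(i < size p) \sum_(j < size q) (p`_i * q`_j) *: 'X^(i + j).
  rewrite -{1}(coefK p) -{1}(coefK q) !poly_def mulr_suml; apply: eq_bigr => i _.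
  by rewrite mulr_sumr; apply: eq_bigr => j _; rewrite -scalerAl -scalerAr scalerA exprD.
rewrite (hweight_coefE (leqnn (size p))) (hweight_coefE (leqnn (size q))) big_distrl /=.
apply: leq_trans (hweight_sum _ _ _) _; apply: leq_sum => i _.
rewrite big_distrr /=; apply: leq_trans (hweight_sum _ _ _) _; apply: leq_sum => j _.
by rewrite hweightZXn mulf_eq0 negb_or mulnb.
Qed.

Lemma modp_Xn_Xnsub1 n i : (0 < n)%N -> 'X^i %% ('X^n - 1) = 'X^(i %% n) :> {poly F}.
Proof.
move=> n_gt0.
have -> : 'X^i = 'X^(i %% n) + 'X^(i %% n) * (('X^n) ^+ (i %/ n) - 1) :> {poly F}.
  by rewrite mulrBr mulr1 addrCA subrr addr0 -exprM -exprD addnC mulnC -divn_eq.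
rewrite (subrX1 ('X^n : {poly F})) mulrCA modpD modp_mulr addr0 modp_small //.
by rewrite size_polyXn size_XnsubC // ltnS ltn_mod.
Qed.

Lemma hweight_modp_Xnsub1 n p : (0 < n)%N -> (hweight (p %% ('X^n - 1)) <= hweight p)%N.
Proof.
move=> n_gt0.
have -> : p %% ('X^n - 1) = \sum_(i < size p) p`_i *: 'X^(i %% n).
  rewrite -{1}(coefK p) poly_def.
  rewrite (big_morph (fun r : {poly F} => r %% ('X^n - 1)) (modpD _) (mod0p _)).
  by apply: eq_bigr => i _; rewrite modpZl modp_Xn_Xnsub1.
rewrite (hweight_coefE (leqnn (size p))); apply: leq_trans (hweight_sum _ _ _) _.
by apply: leq_sum => i _; rewrite hweightZXn.
Qed.

End HammingWeight.

Section GeometricSum.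
Variable R : comNzRingType.
Implicit Types w y : R.

Definition geosum w L := \sum_(k < L) w ^+ k.

Lemma geosumS w L : geosum w L.+1 = geosum w L + w ^+ L.
Proof. exact: big_ord_recr. Qed.

Lemma geosumSl w L : geosum w L.+1 = 1 + w * geosum w L.
Proof.
rewrite /geosum big_ord_recl expr0 mulr_sumr; congr (_ + _).
by apply: eq_bigr => i _; rewrite exprS.
Qed.

Lemma geosumD w a b : geosum w (a + b) = geosum w a + w ^+ a * geosum w b.
Proof.
rewrite /geosum big_split_ord mulr_sumr; congr (_ + _).
by apply: eq_bigr => i _; rewrite exprD.
Qed.

Lemma geosumM w a b : geosum (w ^+ b) a * geosum w b = geosum w (a * b).
Proof.
elim: a => [|a IH]; first by rewrite mul0n /geosum !big_ord0 mul0r.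
by rewrite geosumS mulrDl IH -exprM mulSn addnC geosumD [(b * a)%N]mulnC.
Qed.

Lemma geosum_fixed w y L : w * y = y -> geosum w L * y = y *+ L.
Proof.
move=> wy; rewrite /geosum mulr_suml (eq_bigr (fun _ => y)) ?sumr_const ?card_ord // => k _.
by elim: (nat_of_ord k) => [|k' IH]; rewrite ?expr0 ?mul1r // exprSr -mulrA wy.
Qed.

Hypothesis pchar2_R : 2%N \in [pchar R].

Lemma mul1D_geosum w L : (1 + w) * geosum w L = 1 + w ^+ L.
Proof.
by rewrite [1 + w]addrC [1 + _]addrC -(oppr_pchar2 pchar2_R 1) subrX1.
Qed.

Lemma mulrn_pchar2 y L : y *+ L = y *+ odd L.
Proof.
rewrite -{1}(odd_double_half L) mulrnDr -mul2n mulrnA mulr2n.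
by rewrite (addrr_pchar2 pchar2_R) mul0rn addr0.
Qed.

End GeometricSum.

Lemma F2_cases (c : 'F_2) : c = 0 \/ c = 1.
Proof. by case: c => [[|[|k]]] //= lt_k2; [left|right]; apply/val_inj. Qed.

Lemma pchar2_poly2 : 2%N \in [pchar poly2].
Proof. by rewrite (pchar_poly _ 2); exact: pchar_Fp. Qed.

Section CyclicRing.
Variable n : nat.
Hypothesis n_gt0 : (0 < n)%N.
Local Notation Q := {poly %/ modulus n}.
Local Notation io := (in_qpoly (modulus n)).
Local Notation x := (qpolyX (modulus n)).
Implicit Types (p : poly2) (a b c w : Q).

Lemma size_modulus : size (modulus n) = n.+1.
Proof. by rewrite /modulus size_XnsubC. Qed.

Lemma monic_modulus : modulus n \is monic.
Proof. exact: monicXnsubC. Qed.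

Lemma in_qpolyE p : io p = p %% modulus n :> poly2.
Proof.
rewrite /= Pdiv.IdomainMonic.modpE ?monic_modulus //.
by rewrite /mk_monic size_modulus ltnS n_gt0 monic_modulus.
Qed.

Lemma in_qpolyK c : io c = c.
Proof. exact/val_inj/in_qpoly_small/size_mk_monic. Qed.

Lemma size_qpoly c : (size (c : poly2) <= n)%N.
Proof.
by rewrite -ltnS -size_modulus -(in_qpolyK c) in_qpolyE ltn_modp -size_poly_gt0 size_modulus.
Qed.

Lemma eqR_in_qpoly p q : eqR n p q <-> io p = io q.
Proof. by rewrite /eqR -!in_qpolyE; split => [/val_inj|->]. Qed.

Lemma in_qpoly_eq0 p : (io p == 0) = (modulus n %| p).
Proof. by rewrite /dvdp -in_qpolyE. Qed.

Lemma pchar2_qpoly : 2%N \in [pchar Q].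
Proof. by rewrite (pchar_qpoly _ 2); exact: pchar_Fp. Qed.

Lemma qaddxx a : a + a = 0.
Proof. exact: addrr_pchar2 pchar2_qpoly a. Qed.

Definition qweight c := hweight (c : poly2).
Arguments qweight c%_ring_scope.

Lemma wt_in_qpoly p : wt n p = qweight (io p).
Proof. by rewrite /qweight in_qpolyE. Qed.

Lemma qweight0 : qweight 0 = 0%N.
Proof. exact: hweight0. Qed.

Lemma qweightD a b : (qweight (a + b) <= qweight a + qweight b)%N.
Proof. exact: hweightD. Qed.

Lemma qweight_in_qpoly p : (qweight (io p) <= hweight p)%N.
Proof. by have := hweight_modp_Xnsub1 p n_gt0; rewrite -in_qpolyE. Qed.

Lemma qweightM a b : (qweight (a * b) <= qweight a * qweight b)%N.
Proof.
have -> : a * b = io ((a : poly2) * b) by rewrite in_qpolyM !in_qpolyK.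
exact: leq_trans (qweight_in_qpoly _) (hweightM _ _).
Qed.

Lemma qweight_sum I (r : seq I) (P : pred I) (G : I -> Q) :
  (qweight (\sum_(i <- r | P i) G i) <= \sum_(i <- r | P i) qweight (G i))%N.
Proof. by rewrite /qweight poly_of_qpoly_sum hweight_sum. Qed.

Lemma expqXE k : x ^+ k = io 'X^k.
Proof. by rewrite rmorphXn. Qed.

Lemma qweight_expqX k : (qweight (x ^+ k) <= 1)%N.
Proof. by rewrite expqXE (leq_trans (qweight_in_qpoly _)) ?hweightXn. Qed.

Lemma qweight_geosum k L : (qweight (geosum (x ^+ k) L) <= L)%N.
Proof.
apply: leq_trans (qweight_sum _ _ _) _.
rewrite -[X in (_ <= X)%N]card_ord -sum1_card leq_sum // => i _.
by rewrite -exprM qweight_expqX.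
Qed.

Lemma qX_order : x ^+ n = 1.
Proof.
apply/eqP; rewrite -subr_eq0 expqXE -(rmorph1 io) -rmorphB in_qpoly_eq0.
exact: dvdpp.
Qed.

Definition qones : Q := geosum x n.

Lemma size_ones_poly : size (\poly_(i < n) 1 : poly2) = n.
Proof. by rewrite size_poly_eq // oner_neq0. Qed.

Lemma modulus_factor : modulus n = (1 + 'X) * \poly_(i < n) 1.
Proof.
rewrite /modulus subrX1 (oppr_pchar2 pchar2_poly2) [_ + 1]addrC poly_def.
by congr (_ * _); apply: eq_bigr => i _; rewrite scale1r.
Qed.

Lemma qones_in_qpoly : qones = io (\poly_(i < n) 1).
Proof. by rewrite poly_def rmorph_sum; apply: eq_bigr => i _; rewrite scale1r expqXE. Qed.

Lemma qones_val : (qones : poly2) = \poly_(i < n) 1.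
Proof. by rewrite qones_in_qpoly in_qpolyE modp_small // size_modulus ltnS size_poly. Qed.

Lemma qweight_qones : qweight qones = n.
Proof.
rewrite /qweight qones_val (hweight_coefE (size_poly _ _)) -[RHS]card_ord -sum1_card.
by apply: eq_bigr => i _; rewrite coef_poly ltn_ord oner_neq0.
Qed.

Lemma qones_neq0 : qones != 0.
Proof. by apply/eqP => qones0; move: n_gt0; rewrite -qweight_qones qones0 qweight0. Qed.

Lemma mul1DX_qones : (1 + x) * qones = 0.
Proof. by rewrite mul1D_geosum ?pchar2_qpoly // qX_order qaddxx. Qed.

Lemma expqX_qones k : x ^+ k * qones = qones.
Proof.
have x_qones : x * qones = qones.
  move/eqP: mul1DX_qones.
  by rewrite mulrDl mul1r addr_eq0 (oppr_pchar2 pchar2_qpoly) => /eqP.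
by elim: k => [|k IH]; rewrite ?expr0 ?mul1r // exprS -mulrA IH.
Qed.

Lemma mul1DX_eq0 w : (1 + x) * w = 0 -> w = 0 \/ w = qones.
Proof.
have -> : (1 + x) * w = io ((1 + 'X) * (w : poly2)).
  by rewrite in_qpolyM in_qpolyD in_qpoly1 in_qpolyK.
move/eqP; rewrite in_qpoly_eq0 => dvd_w.
have /dvdpP [s w_eq] : \poly_(i < n) 1 %| (w : poly2).
  have nz_1DX : 1 + 'X != 0 :> poly2 by rewrite -size_poly_gt0 addrC size_XaddC.
  by rewrite -(dvdp_mul2l _ _ nz_1DX) -modulus_factor.
have size_s : (size s <= 1)%N.
  have [->|s_neq0] := eqVneq s 0; first by rewrite size_poly0.
  have ones_neq0 : \poly_(i < n) 1 != 0 :> poly2 by rewrite -size_poly_gt0 size_ones_poly.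
  have := size_qpoly w.
  by rewrite w_eq size_mul // size_ones_poly -subn1 leq_subLR leq_add2r.
have -> : w = io (s * \poly_(i < n) 1) by rewrite -w_eq in_qpolyK.
rewrite (size1_polyC size_s); have [->|->] := F2_cases s`_0.
  by left; rewrite mul0r in_qpoly0.
by right; rewrite mul1r qones_in_qpoly.
Qed.

Lemma mul_qones_eq0 a : a * qones = 0 -> exists c, a = c * (1 + x).
Proof.
move=> a_qones; set r : poly2 := a.
have root1 : root (r - (r.[1])%:P) 1 by rewrite /root hornerD hornerN hornerC subrr.
have [s r_eq] := factor_theorem _ _ root1.
have a_eq : a = io s * (1 + x) + io (r.[1])%:P.
  have -> : 1 + x = io ('X - 1%:P).
    have E : io ('X - 1%:P) + 1 = x by rewrite -in_qpoly1 -in_qpolyD polyC1 subrK.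
    by rewrite -E addrC -addrA qaddxx addr0.
  by rewrite -in_qpolyM -r_eq -in_qpolyD subrK in_qpolyK.
have [r1_0|r1_1] := F2_cases r.[1].
  by exists (io s); rewrite a_eq r1_0 in_qpoly0 addr0.
move: a_qones; rewrite a_eq r1_1 in_qpoly1 mulrDl -mulrA mul1DX_qones mulr0 add0r mul1r.
by move/eqP; rewrite (negbTE qones_neq0).
Qed.

Lemma expqX_inv k : (k <= n)%N -> (x ^+ (n - 1)) ^+ k = x ^+ (n - k).
Proof.
move=> le_kn.
have xk_unit : x ^+ k * x ^+ (n - k) = 1 by rewrite -exprD subnKC // qX_order.
rewrite -[LHS]mulr1 -xk_unit mulrA -exprMn -exprSr.
have -> : ((n - 1).+1 = n)%N by lia.
by rewrite qX_order expr1n mul1r.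
Qed.

Lemma in_qpoly_1DXn k : io (1 + 'X^k) = 1 + x ^+ k.
Proof. by rewrite in_qpolyD in_qpoly1 expqXE. Qed.

Lemma in_qpoly_1DX : io (1 + 'X) = 1 + x.
Proof. exact: in_qpoly_1DXn 1. Qed.

Lemma in_qpoly_1Dxinv k : (k <= n)%N -> io (1 + xinv n k) = 1 + (x ^+ (n - 1)) ^+ k.
Proof. by move=> le_kn; rewrite in_qpoly_1DXn expqX_inv. Qed.

Implicit Types (z P V : Q).

Definition gb_cycle z D P V := P * (1 + z ^+ D) + V * (1 + z) = 0.
Definition gb_boundary z D P V := exists c, P = c * (1 + z) /\ V = c * (1 + z ^+ D).
Definition gb_logical z D P V := gb_cycle z D P V /\ ~ gb_boundary z D P V.

Lemma C1_gb_cycle d u v : C1 n d u v <-> gb_cycle x d.+1 (io u) (io v).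
Proof.
by rewrite /C1 /gb_cycle eqR_in_qpoly in_qpoly0 in_qpolyD !in_qpolyM in_qpoly_1DXn in_qpoly_1DX.
Qed.

Lemma C2_gb_boundary d u v : C2 n d u v <-> gb_boundary x d.+1 (io u) (io v).
Proof.
split=> [[c [/eqR_in_qpoly -> /eqR_in_qpoly ->]]|[c [u_eq v_eq]]].
  by exists (io c); rewrite !in_qpolyM in_qpoly_1DXn in_qpoly_1DX.
exists (c : poly2); split; apply/eqR_in_qpoly.
  by rewrite in_qpolyM in_qpoly_1DX in_qpolyK.
by rewrite in_qpolyM in_qpoly_1DXn in_qpolyK.
Qed.

Lemma C1'_gb_cycle d u v : (d.+1 <= n)%N ->
  C1' n d u v <-> gb_cycle (x ^+ (n - 1)) d.+1 (io v) (io u).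
Proof.
move=> le_dn; rewrite /C1' /gb_cycle eqR_in_qpoly in_qpoly0 in_qpolyD !in_qpolyM.
by rewrite !in_qpoly_1Dxinv // expr1 addrC.
Qed.

Lemma C2'_gb_boundary d u v : (d.+1 <= n)%N ->
  C2' n d u v <-> gb_boundary (x ^+ (n - 1)) d.+1 (io v) (io u).
Proof.
move=> le_dn; split=> [[c [/eqR_in_qpoly -> /eqR_in_qpoly ->]]|[c [v_eq u_eq]]].
  by exists (io c); rewrite !in_qpolyM !in_qpoly_1Dxinv // expr1.
exists (c : poly2); split; apply/eqR_in_qpoly.
  by rewrite in_qpolyM in_qpoly_1Dxinv // in_qpolyK.
by rewrite in_qpolyM in_qpoly_1Dxinv // expr1 in_qpolyK.
Qed.

Lemma X_logical_gb d u v : X_logical n d u v <-> gb_logical x d.+1 (io u) (io v).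
Proof. by rewrite /X_logical /gb_logical C1_gb_cycle C2_gb_boundary. Qed.

Lemma Z_logical_gb d u v : (d.+1 <= n)%N ->
  Z_logical n d u v <-> gb_logical (x ^+ (n - 1)) d.+1 (io v) (io u).
Proof.
by move=> le_dn; rewrite /Z_logical /gb_logical C1'_gb_cycle // C2'_gb_boundary.
Qed.

Definition gb_pairing P V g t := P * g + V * t.

Section DualCycles.
Variables (h e : nat) (z : Q).
Hypothesis n_eq : n = (2 * h * h)%N.
Hypothesis h_ge2 : (2 <= h)%N.
Hypothesis z_eq : z = x ^+ e.
Hypothesis dvd_1DX : exists r, 1 + x = r * (1 + z).
Hypothesis geosum_z : geosum z n = qones.
Local Notation D := (2 * h).+1.

Lemma z_order : z ^+ n = 1.
Proof. by rewrite z_eq -exprM mulnC exprM qX_order expr1n. Qed.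

Lemma expz_qones k : z ^+ k * qones = qones.
Proof. by rewrite z_eq -exprM expqX_qones. Qed.

Lemma qweight_expz k : (qweight (z ^+ k) <= 1)%N.
Proof. by rewrite z_eq -exprM qweight_expqX. Qed.

Lemma qweight_geosum_expz k L : (qweight (geosum (z ^+ k) L) <= L)%N.
Proof. by rewrite z_eq -exprM qweight_geosum. Qed.

Lemma qweight_1Dexpz k : (qweight (1 + z ^+ k) <= 2)%N.
Proof.
apply: leq_trans (qweightD _ _) _.
by rewrite -(expr0 z) (leq_add (qweight_expz 0) (qweight_expz k)).
Qed.

Lemma gb_pairing_const P V g t :
  gb_cycle z D P V -> (1 + z) * g = (1 + z ^+ D) * t ->
  gb_pairing P V g t = 0 \/ gb_pairing P V g t = qones.
Proof.
move=> cycPV gt_eq; apply: mul1DX_eq0; have [r ->] := dvd_1DX.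
have -> : r * (1 + z) * gb_pairing P V g t = r * (P * ((1 + z) * g) + V * (1 + z) * t).
  by rewrite /gb_pairing; ring.
by rewrite gt_eq [P * _]mulrA -mulrDl cycPV mul0r mulr0.
Qed.

Lemma expz_nD k : z ^+ (n + k) = z ^+ k.
Proof. by rewrite exprD z_order mul1r. Qed.

Lemma qmul1D_geosum w L : (1 + w) * geosum w L = 1 + w ^+ L.
Proof. exact: mul1D_geosum pchar2_qpoly w L. Qed.

(* The cycles (tA, gA), (tB, gB), (tC, gC) against which logical operators are
   paired; (tC, gC) is a logical operator of weight 2h. *)
Definition gA := geosum z h.
Definition tA := geosum (z ^+ D) h.
Definition gB := z ^+ (n - h - 1) * geosum z h.+1.
Definition tB := geosum (z ^+ D) (h - 1).
Definition gC := z ^+ (n - 1).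
Definition tC := geosum (z ^+ D) (2 * h - 1).

Lemma dualA : (1 + z) * gA = 1 + z ^+ h /\ (1 + z ^+ D) * tA = 1 + z ^+ h.
Proof.
have DhE : (D * h = n + h)%N by rewrite n_eq; nia.
by rewrite !qmul1D_geosum -exprM DhE expz_nD.
Qed.

Lemma dualB :
  (1 + z) * gB = 1 + z ^+ (n - h - 1) /\ (1 + z ^+ D) * tB = 1 + z ^+ (n - h - 1).
Proof.
have DhE : (D * (h - 1) = n - h - 1)%N by rewrite n_eq; nia.
have nhE : (n - h - 1 + h.+1 = n)%N by rewrite n_eq; nia.
rewrite !qmul1D_geosum -exprM DhE mulrCA qmul1D_geosum mulrDr mulr1 -exprD nhE z_order.
by rewrite addrC.
Qed.

Lemma dualC : (1 + z) * gC = 1 + z ^+ (n - 1) /\ (1 + z ^+ D) * tC = 1 + z ^+ (n - 1).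
Proof.
have DhE : (D * (2 * h - 1) = n + (n - 1))%N by rewrite n_eq; nia.
have nE : ((n - 1).+1 = n)%N by rewrite n_eq; nia.
rewrite !qmul1D_geosum -exprM DhE expz_nD mulrDl mul1r -exprS nE z_order.
by rewrite addrC.
Qed.

Lemma gC_decomp : gC = gA + z ^+ h * gB.
Proof.
have hE : (h + (n - h - 1) = n - 1)%N by rewrite n_eq; nia.
have nE : ((n - 1).+1 = n)%N by rewrite n_eq; nia.
rewrite /gB mulrA -exprD hE geosumSl mulrDr mulr1 mulrA -exprSr nE z_order mul1r.
by rewrite addrCA qaddxx addr0.
Qed.

Lemma tC_decomp : tC = tA + z ^+ h * tB.
Proof.
have hE : (2 * h - 1 = h + (h - 1))%N by nia.
have DhE : (D * h = n + h)%N by rewrite n_eq; nia.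
by rewrite /tC hE geosumD -exprM DhE expz_nD.
Qed.

Lemma tAB : tA + tB = z ^+ (n - h - 1).
Proof.
have DhE : (D * (h - 1) = n - h - 1)%N by rewrite n_eq; nia.
have -> : tA = geosum (z ^+ D) (h - 1).+1 by rewrite /tA (_ : (h - 1).+1 = h) //; nia.
by rewrite geosumS -exprM DhE addrAC qaddxx add0r.
Qed.

Lemma gAB : gA + gB = z ^+ (n - h - 1) * geosum z D.
Proof.
have DE : (D = h.+1 + h)%N by nia.
have nhE : (n - h - 1 + h.+1 = n)%N by rewrite n_eq; nia.
by rewrite DE geosumD mulrDr mulrA -exprD nhE z_order mul1r addrC.
Qed.

Lemma gA_tA : gA + geosum z D * tA = qones.
Proof.
have hDE : (h * D = n + h)%N by rewrite n_eq; nia.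
by rewrite /tA mulrC geosumM hDE geosumD geosum_z z_order mul1r addrCA qaddxx addr0.
Qed.

Lemma gb_pairing_C P V :
  gb_pairing P V gC tC = gb_pairing P V gA tA + z ^+ h * gb_pairing P V gB tB.
Proof. by rewrite /gb_pairing gC_decomp tC_decomp; ring. Qed.

Lemma gb_pairing_AB P V :
  gb_pairing P V gA tA + gb_pairing P V gB tB = z ^+ (n - h - 1) * (P * geosum z D + V).
Proof.
have -> : gb_pairing P V gA tA + gb_pairing P V gB tB = P * (gA + gB) + V * (tA + tB).
  by rewrite /gb_pairing; ring.
by rewrite gAB tAB; ring.
Qed.

Lemma gb_boundary_of_pairings P V :
  gb_pairing P V gA tA = 0 -> gb_pairing P V gB tB = 0 -> gb_boundary z D P V.
Proof.
move=> WA0 WB0.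
have V_eq : V = P * geosum z D.
  have nhE : (h.+1 + (n - h - 1) = n)%N by rewrite n_eq; nia.
  have := congr1 (fun c => z ^+ h.+1 * c) (gb_pairing_AB P V).
  rewrite /= WA0 WB0 addr0 mulr0 mulrA -exprD nhE z_order mul1r => /esym/eqP.
  by rewrite addr_eq0 (oppr_pchar2 pchar2_qpoly) => /eqP.
have [c P_eq] : exists c, P = c * (1 + x).
  by apply: mul_qones_eq0; rewrite -gA_tA mulrDr mulrA -V_eq.
have [r r_eq] := dvd_1DX.
exists (c * r); split; first by rewrite P_eq r_eq mulrA.
by rewrite V_eq P_eq r_eq !mulrA -[_ * geosum z D]mulrA qmul1D_geosum.
Qed.

Lemma gb_logical_tC_gC : gb_logical z D tC gC.
Proof.
have [gC_eq tC_eq] := dualC.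
split; first by rewrite /gb_cycle mulrC tC_eq mulrC gC_eq qaddxx.
move=> [c [tC_bd _]].
have : tC * qones = qones.
  rewrite /tC geosum_fixed ?expz_qones // mulrn_pchar2 ?pchar2_qpoly //.
  have -> : (2 * h - 1 = (h - 1).*2.+1)%N by rewrite -mul2n; nia.
  by rewrite /= odd_double.
rewrite tC_bd -mulrA mulrDl mul1r (expz_qones 1) qaddxx mulr0 => /esym/eqP.
by rewrite (negbTE qones_neq0).
Qed.

Section LogicalWeight.
Variables p q j1 j2 : Q.
Local Notation P := (p + j1 * (1 + z)).
Local Notation V := (q + j2 * (1 + z ^+ D)).
Local Notation J := (qweight j1 + qweight j2)%N.

Lemma pairing_ones_weight g t k bg bt :
  (1 + z) * g = 1 + z ^+ k -> (1 + z ^+ D) * t = 1 + z ^+ k ->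
  (qweight g <= bg)%N -> (qweight t <= bt)%N -> gb_pairing P V g t = qones ->
  (n <= qweight p * bg + qweight q * bt + 2 * J)%N.
Proof.
move=> g_eq t_eq le_g le_t W1; rewrite -qweight_qones -W1.
have -> : gb_pairing P V g t =
    p * g + q * t + (j1 * ((1 + z) * g) + j2 * ((1 + z ^+ D) * t)).
  by rewrite /gb_pairing; ring.
rewrite g_eq t_eq -mulrDl; apply: leq_trans (qweightD _ _) _; apply: leq_add.
  apply: leq_trans (qweightD _ _) (leq_add _ _).
    by apply: leq_trans (qweightM _ _) _; rewrite leq_mul2l le_g orbT.
  by apply: leq_trans (qweightM _ _) _; rewrite leq_mul2l le_t orbT.
rewrite mulnC; apply: leq_trans (qweightM _ _) _.
exact: leq_mul (qweightD _ _) (qweight_1Dexpz _).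
Qed.

Lemma weight_of_pairingA :
  gb_pairing P V gA tA = qones -> (2 * h <= J + qweight p + qweight q)%N.
Proof.
move=> WA; have [gA_eq tA_eq] := dualA.
have wgA : (qweight gA <= h)%N by have := qweight_geosum_expz 1 h; rewrite expr1.
have := pairing_ones_weight gA_eq tA_eq wgA (qweight_geosum_expz D h) WA.
rewrite n_eq; nia.
Qed.

Lemma weight_of_pairingsBC :
  gb_pairing P V gB tB = qones -> gb_pairing P V gC tC = qones ->
  (2 * h <= J + qweight p + qweight q)%N.
Proof.
move=> WB WC; have [gB_eq tB_eq] := dualB; have [gC_eq tC_eq] := dualC.
have wgB : (qweight gB <= h.+1)%N.
  apply: leq_trans (qweightM _ _) _; rewrite -[X in (_ <= X)%N]mul1n.
  apply: leq_mul; first exact: qweight_expz.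
  by have := qweight_geosum_expz 1 h.+1; rewrite expr1.
have := pairing_ones_weight gB_eq tB_eq wgB (qweight_geosum_expz D (h - 1)) WB.
have wtC := qweight_geosum_expz D (2 * h - 1).
have := pairing_ones_weight gC_eq tC_eq (qweight_expz (n - 1)) wtC WC.
rewrite n_eq; nia.
Qed.

Lemma gb_logical_weight : gb_logical z D P V -> (2 * h <= J + qweight p + qweight q)%N.
Proof.
move=> [cycPV not_bd].
have pairing_const g t k : (1 + z) * g = 1 + z ^+ k /\ (1 + z ^+ D) * t = 1 + z ^+ k ->
    gb_pairing P V g t = 0 \/ gb_pairing P V g t = qones.
  by move=> [g_eq t_eq]; apply: gb_pairing_const; rewrite // g_eq t_eq.
have [WA0|] := pairing_const _ _ _ dualA; last exact: weight_of_pairingA.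
have [WB0|WB1] := pairing_const _ _ _ dualB.
  by case: not_bd; apply: gb_boundary_of_pairings.
apply: weight_of_pairingsBC => //.
by rewrite gb_pairing_C WA0 WB1 add0r expz_qones.
Qed.
End LogicalWeight.
End DualCycles.

Lemma geosum_qXinv : geosum (x ^+ (n - 1)) n = qones.
Proof.
have -> : geosum (x ^+ (n - 1)) n = \sum_(i < n) x ^+ (n - i).
  by apply: eq_bigr => i _; rewrite expqX_inv // ltnW.
rewrite (reindex_inj rev_ord_inj) /= (eq_bigr (fun i : 'I_n => x * x ^+ i)) => [|i _].
  by rewrite -mulr_sumr (expqX_qones 1).
by rewrite subKn // exprS.
Qed.

Section RLDistance.
Variable h : nat.
Hypotheses (n_eq : n = (2 * h * h)%N) (h_ge2 : (2 <= h)%N).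
Local Notation d := (2 * h)%N.

Lemma RL_bad_weight j u v : RL_bad n d j u v -> (d <= wt n j + wt n u + wt n v)%N.
Proof.
have le_Dn : (d.+1 <= n)%N by rewrite n_eq; nia.
rewrite !wt_in_qpoly; case=> [/X_logical_gb | /(Z_logical_gb _ _ le_Dn)].
  rewrite in_qpolyD in_qpolyM in_qpoly_1DX => logical.
  have dvd_1DX : exists r, 1 + x = r * (1 + x) by exists 1; rewrite mul1r.
  have := @gb_logical_weight h 1 x n_eq h_ge2 (esym (expr1 x)) dvd_1DX (erefl qones)
    (io u) (io v) (io j) 0.
  by rewrite mul0r addr0 qweight0 addn0; apply.
rewrite in_qpolyD in_qpolyM in_qpoly_1Dxinv // => logical.
have dvd_1DX : exists r, 1 + x = r * (1 + x ^+ (n - 1)).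
  have nE : ((n - 1).+1 = n)%N by lia.
  by exists x; rewrite mulrDr mulr1 -exprS nE qX_order addrC.
have := @gb_logical_weight h (n - 1) (x ^+ (n - 1)) n_eq h_ge2 erefl dvd_1DX geosum_qXinv
  (io v) (io u) 0 (io j).
by rewrite mul0r addr0 qweight0 add0n addnAC; apply.
Qed.

Lemma RL_bad_witness : exists u v, RL_bad n d 0 u v /\ (wt n 0 + wt n u + wt n v <= d)%N.
Proof.
exists (\sum_(k < d - 1) 'X^(d.+1 * k)), 'X^(n - 1).
have u_eq : io (\sum_(k < d - 1) 'X^(d.+1 * k)) = tC h x.
  rewrite /tC /geosum (eq_bigr (fun k : 'I_(d - 1) => io 'X^(d.+1 * k))) => [|k _].
    by rewrite -linear_sum.
  by rewrite -exprM expqXE.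
have v_eq : io 'X^(n - 1) = gC x by rewrite -expqXE.
split.
  left; rewrite mul0r addr0 X_logical_gb u_eq v_eq.
  exact: gb_logical_tC_gC n_eq h_ge2 (esym (expr1 x)).
rewrite !wt_in_qpoly in_qpoly0 qweight0 u_eq v_eq.
have := qweight_geosum_expz (esym (expr1 x)) d.+1 (d - 1).
have := qweight_expz (esym (expr1 x)) (n - 1).
rewrite /tC /gC add0n => w_gC w_tC.
by apply: leq_trans (leq_add w_tC w_gC) _; rewrite subnK // muln_gt0 (ltnW h_ge2).
Qed.

End RLDistance.
End CyclicRing.

Theorem theorem9 (d : nat) :
  (4 <= d)%N -> ~~ odd d ->
  effective_distance_RL ((d * d)./2) d d.
Proof.
move=> d_ge4 d_even.
have [h d_eq] : exists h, d = (2 * h)%N.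
  by exists d./2; rewrite -[LHS](odd_double_half d) (negbTE d_even) add0n mul2n.
have h_ge2 : (2 <= h)%N by lia.
have n_eq : ((d * d)./2 = 2 * h * h)%N.
  by rewrite d_eq (_ : 2 * h * (2 * h) = (2 * h * h).*2)%N ?doubleK // -mul2n mulnCA.
have n_gt0 : (0 < 2 * h * h)%N by rewrite !muln_gt0 (ltnW h_ge2).
rewrite n_eq d_eq; split.
  have [u [v [bad le_d]]] := RL_bad_witness n_gt0 erefl h_ge2.
  exists 0, u, v; split => //.
  by apply/eqP; rewrite eqn_leq le_d (RL_bad_weight n_gt0 erefl h_ge2 bad).
by move=> j u v; apply: RL_bad_weight.
Qed.
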